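(* Let $p\in(0,1/2]$ be a fixed constant. There exist positive constants $C, c$ depending only on $p$ such that the following holds. Let $d\le n$ be positive integers with $d=pn$, let $m$ be an integer with $n/2\le m\le n$, and let $v\in\mathbb{S}^{n-1}$ be a fixed vector. Let $M$ be a random $m\times n$ matrix whose rows are independent random vectors, each uniformly distributed on the set of vectors in $\{0,1\}^n$ with exactly $d$ ones. Then \[ \mathbb{P}\left(\|Mv\|_2\le c\sqrt{pn}\right)\le e^{-Cn}. \]
   Context: $\mathbb{S}^{n-1}=\{x\in\mathbb{R}^n:\|x\|_2=1\}$ is the Euclidean unit sphere and $\|\cdot\|_2$ the Euclidean norm. *)

From HB Require Import structures.
From mathcomp Require Import all_boot all_order all_algebra.
From mathcomp Require Import all_classical all_reals all_analysis.
Set Implicit Arguments. Unset Strict Implicit. Unset Printing Implicit Defensive.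
Import Order.TTheory GRing.Theory Num.Theory.
Local Open Scope ring_scope.

(* A random m x n matrix with rows indexed by 'I_m is encoded by the family
   S : {ffun 'I_m -> {set 'I_n}} of supports of its rows (each row is a
   0/1 vector; S i is the set of columns where row i has a one). *)
Definition bin_mx (R : realType) (m n : nat) (S : {ffun 'I_m -> {set 'I_n}})
  : 'M[R]_(m, n) := \matrix_(i, j) (j \in S i)%:R.

Definition vnorm (R : realType) (n : nat) (x : 'cV[R]_n) : R :=
  Num.sqrt (\sum_(i < n) x i 0 ^+ 2).

Definition rows_dsparse (m n d : nat) : {set {ffun 'I_m -> {set 'I_n}}} :=
  [set S : {ffun 'I_m -> {set 'I_n}} | [forall i, #|S i| == d]].

(* Uniform measure on the product of the row spaces = independent rows,
   each uniform on the vectors of {0,1}^n with exactly d ones. *)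
Definition unif_prob (R : realType) (T : finType) (Omega : {set T}) (E : pred T) : R :=
  #|[set x in Omega | E x]|%:R / #|Omega|%:R.
Arguments bin_mx {R m n}.
Arguments vnorm {R n}.
Arguments unif_prob {R T}.

From HB Require Import structures.
From mathcomp Require Import all_boot all_order all_algebra.
From mathcomp Require Import all_classical all_reals all_analysis.
From mathcomp Require Import ring lra zify.
Import Order.TTheory GRing.Theory Num.Theory.
Local Open Scope ring_scope.
Set Implicit Arguments. Unset Strict Implicit. Unset Printing Implicit Defensive.

(* For a uniformly random d-subset A of [n] put Y_A = sum_(i in A) v_i, so that
   |Mv|^2 is a sum of m independent copies of Y^2.  Expanding Y^2 and Y^4 over
   tuples of distinct indices and counting the d-subsets that contain a given
   t-subset gives E Y^2 >= p/2 and E Y^4 <= (100/p) (E Y^2)^2, so the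
   Paley-Zygmund inequality yields P(Y^2 >= p/4) >= p/400.  Hence
   E exp(-(4/p) Y^2) <= 1 - p/800 <= exp(-p/800), and Markov's inequality for
   exp(-(4/p) |Mv|^2), the independence of the rows and m >= n/2 give
   P(|Mv|^2 <= p^2 n/12800) <= exp(-pn/3200). *)

Section InjectiveSums.
Variables (R : comPzRingType) (n : nat) (v : 'I_n -> R).

(* [inj_sum [:: f_1; ...; f_k] U] is the sum of [f_1 i_1 * ... * f_k i_k] over
   the pairwise distinct [i_1, ..., i_k] in [U]. *)
Fixpoint inj_sum (fs : seq ('I_n -> R)) (U : {set 'I_n}) : R :=
  if fs is f :: fs' then \sum_(i in U) f i * inj_sum fs' (U :\ i) else 1.

Definition psum (k : nat) (U : {set 'I_n}) : R := \sum_(i in U) v i ^+ k.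

Definition powv (k : nat) : 'I_n -> R := fun i => v i ^+ k.

Lemma psum_setD1 k (U : {set 'I_n}) i : i \in U -> psum k (U :\ i) = psum k U - v i ^+ k.
Proof. by move=> iU; rewrite /psum (big_setD1 i iU) /= addrC addrK. Qed.

Lemma sum_poly4_psum (U : {set 'I_n}) (c1 c2 c3 c4 : R) :
  \sum_(i in U) (c1 * v i + c2 * v i ^+ 2 + c3 * v i ^+ 3 + c4 * v i ^+ 4)
  = c1 * psum 1 U + c2 * psum 2 U + c3 * psum 3 U + c4 * psum 4 U.
Proof. by rewrite !big_split /= /psum !mulr_sumr; under [in RHS]eq_bigr do rewrite expr1. Qed.

Lemma inj_sum1 k (U : {set 'I_n}) : inj_sum [:: powv k] U = psum k U.
Proof. by apply: eq_bigr => i _; rewrite mulr1. Qed.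

Lemma inj_sum2 a b c (U : {set 'I_n}) : (a + b)%N = c ->
  inj_sum [:: powv a; powv b] U = psum a U * psum b U - psum c U.
Proof.
move=> <-; rewrite (mulrC (psum a U)) [psum a _]/psum mulr_sumr -sumrB; apply: eq_bigr => i iU.
by rewrite -/(inj_sum [:: powv b] _) inj_sum1 psum_setD1 // /powv exprD; ring.
Qed.

Lemma inj_sum111 (U : {set 'I_n}) : inj_sum [:: powv 1; powv 1; powv 1] U =
  psum 1 U ^+ 3 - 3 * psum 1 U * psum 2 U + 2 * psum 3 U.
Proof.
rewrite [LHS]/= (eq_bigr (fun i => (psum 1 U ^+ 2 - psum 2 U) * v i
    + (- 2 * psum 1 U) * v i ^+ 2 + 2 * v i ^+ 3 + 0 * v i ^+ 4)).
  by rewrite sum_poly4_psum; ring.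
move=> i iU; rewrite -/(inj_sum [:: powv 1; powv 1] _) (@inj_sum2 1 1 2) //.
by rewrite !psum_setD1 // /powv; ring.
Qed.

Lemma inj_sum211 (U : {set 'I_n}) : inj_sum [:: powv 2; powv 1; powv 1] U =
  (psum 1 U ^+ 2 - psum 2 U) * psum 2 U - 2 * psum 1 U * psum 3 U + 2 * psum 4 U.
Proof.
rewrite [LHS]/= (eq_bigr (fun i => 0 * v i + (psum 1 U ^+ 2 - psum 2 U) * v i ^+ 2
    + (- 2 * psum 1 U) * v i ^+ 3 + 2 * v i ^+ 4)).
  by rewrite sum_poly4_psum; ring.
move=> i iU; rewrite -/(inj_sum [:: powv 1; powv 1] _) (@inj_sum2 1 1 2) //.
by rewrite !psum_setD1 // /powv; ring.
Qed.

Lemma inj_sum1111 (U : {set 'I_n}) : inj_sum [:: powv 1; powv 1; powv 1; powv 1] U =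
  psum 1 U ^+ 4 - 6 * psum 1 U ^+ 2 * psum 2 U + 3 * psum 2 U ^+ 2
  + 8 * psum 1 U * psum 3 U - 6 * psum 4 U.
Proof.
rewrite [LHS]/= (eq_bigr (fun i =>
    (psum 1 U ^+ 3 - 3 * psum 1 U * psum 2 U + 2 * psum 3 U) * v i
    + (- 3 * psum 1 U ^+ 2 + 3 * psum 2 U) * v i ^+ 2
    + (6 * psum 1 U) * v i ^+ 3 + (- 6) * v i ^+ 4)).
  by rewrite sum_poly4_psum; ring.
move=> i iU; rewrite -/(inj_sum [:: powv 1; powv 1; powv 1] _) inj_sum111.
by rewrite !psum_setD1 // /powv; ring.
Qed.

Lemma psum1_sqr_inj_sum (U : {set 'I_n}) :
  psum 1 U ^+ 2 = inj_sum [:: powv 1; powv 1] U + inj_sum [:: powv 2] U.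
Proof. by rewrite (@inj_sum2 1 1 2) // inj_sum1; ring. Qed.

Lemma psum1_exp4_inj_sum (U : {set 'I_n}) : psum 1 U ^+ 4 =
  inj_sum [:: powv 1; powv 1; powv 1; powv 1] U + 6 * inj_sum [:: powv 2; powv 1; powv 1] U
  + 4 * inj_sum [:: powv 3; powv 1] U + 3 * inj_sum [:: powv 2; powv 2] U
  + inj_sum [:: powv 4] U.
Proof.
by rewrite inj_sum1111 inj_sum211 (@inj_sum2 3 1 4) // (@inj_sum2 2 2 4) // inj_sum1; ring.
Qed.

End InjectiveSums.

(* [nsupsets t u d] is the number of d-subsets of a u-set that contain t given
   elements. *)
Fixpoint nsupsets (t u d : nat) : nat :=
  match t, d with
  | 0, _ => 'C(u, d)
  | t'.+1, 0 => 0
  | t'.+1, d'.+1 => nsupsets t' u.-1 d'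
  end.

Lemma sum_draws_setD1 (R : nmodType) (T : finType) (U : {set T}) (i : T) d
    (F : {set T} -> R) : i \in U ->
  \sum_(A in [set A : {set T} | A \subset U & #|A| == d.+1] | i \in A) F (A :\ i)
  = \sum_(B in [set B : {set T} | B \subset U :\ i & #|B| == d]) F B.
Proof.
move=> iU; rewrite (reindex_onto (fun B => i |: B) (fun A => A :\ i)) /=; last first.
  by move=> A /andP[_ iA]; rewrite finset.setD1K.
apply: eq_big => [B | B /andP[_ /eqP -> //]].
rewrite !inE eqxx andbT subsetD1 finset.subUset finset.sub1set iU /=.
have [iB | iB] := boolP (i \in B).
  rewrite andbF andFb; apply/negbTE; rewrite negb_and; apply/orP; right.
  by apply/eqP => E; move: iB; rewrite -E setD11.
by rewrite setU1K // cardsU1 iB add1n eqSS eqxx andbT /= andbT.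
Qed.

Lemma sum_draws_inj_sum (R : comPzRingType) n (fs : seq ('I_n -> R)) (U : {set 'I_n}) d :
  \sum_(A in [set A : {set 'I_n} | A \subset U & #|A| == d]) inj_sum fs A
  = (nsupsets (size fs) #|U| d)%:R * inj_sum fs U.
Proof.
elim: fs U d => [|f fs IH] U d; first by rewrite sumr_const cards_draws mulr1.
case: d => [|d].
  rewrite mul0r; apply: big1 => A; rewrite inE => /andP[_ /eqP/cards0_eq ->].
  by rewrite /= big_set0.
rewrite /= (exchange_big_dep (fun i => i \in U)) /=; last first.
  by move=> A i; rewrite inE => /andP[/fintype.subsetP AU _] /AU.
rewrite mulr_sumr; apply: eq_bigr => i iU.
rewrite -mulr_sumr (@sum_draws_setD1 _ _ _ i d (inj_sum fs)) // IH (cardsD1 i U) iU.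
by rewrite mulrCA.
Qed.

Lemma nsupsetsS_mul t u d :
  (nsupsets t.+1 u d * (u - t) = (d - t) * nsupsets t u d)%N.
Proof.
elim: t u d => [|t IH] u [|d] //=; first by rewrite !subn0 mulnC mul_bin_diag.
by rewrite subSS -IH; congr (_ * _)%N; lia.
Qed.

Lemma nsupsets_eq0 t u d : (d <= t)%N -> nsupsets t.+1 u d = 0%N.
Proof. by elim: t u d => [|t IH] u [|d] //= dt; apply: IH. Qed.

Lemma nsupsets1_mul u d : (nsupsets 1 u d * u = d * nsupsets 0 u d)%N.
Proof. by have := nsupsetsS_mul 0 u d; rewrite !subn0. Qed.

Lemma nsupsetsS_le t u d : (d <= u)%N -> (t < u)%N ->
  (nsupsets t.+1 u d * u <= d * nsupsets t u d)%N.
Proof.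
move=> du tu; have [dt | td] := leqP d t; first by rewrite nsupsets_eq0.
rewrite -(leq_pmul2r (_ : 0 < u - t)%N) ?subn_gt0 // mulnAC nsupsetsS_mul.
by rewrite mulnAC [X in (_ <= X)%N]mulnAC leq_mul2r; apply/orP; right; nia.
Qed.

Lemma nsupsets2_ge u d : (2 <= d)%N -> (d <= u)%N ->
  (d * d * nsupsets 0 u d <= 2 * nsupsets 2 u d * u * u)%N.
Proof.
move=> d2 du; rewrite -(leq_pmul2r (_ : 0 < u - 1)%N); last by lia.
have -> : (2 * nsupsets 2 u d * u * u * (u - 1) = 2 * (nsupsets 2 u d * (u - 1)) * u * u)%N.
  by ring.
rewrite nsupsetsS_mul.
have -> : (2 * ((d - 1) * nsupsets 1 u d) * u * u
           = 2 * (d - 1) * (nsupsets 1 u d * u) * u)%N by ring.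
rewrite nsupsets1_mul.
have -> : (2 * (d - 1) * (d * nsupsets 0 u d) * u = d * nsupsets 0 u d * (2 * (d - 1) * u))%N.
  by ring.
have -> : (d * d * nsupsets 0 u d * (u - 1) = d * nsupsets 0 u d * (d * (u - 1)))%N by ring.
by rewrite leq_mul2l; apply/orP; right; nia.
Qed.

Lemma sqr_sum_le_card_sum_sqr (R : realDomainType) (T : finType) (G : {pred T})
    (F : T -> R) :
  (\sum_(x in G) F x) ^+ 2 <= #|G|%:R * \sum_(x in G) F x ^+ 2.
Proof.
rewrite -(ler_pM2l (ltr0Sn R 1)) expr2 mulr_suml [X in X <= _]mulr_sumr.
apply: le_trans (_ : \sum_(x in G) \sum_(y in G) (F x ^+ 2 + F y ^+ 2) <= _).
  apply: ler_sum => x _; rewrite mulr_sumr mulr_sumr; apply: ler_sum => y _.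
  by rewrite -subr_ge0 (_ : _ - _ = (F x - F y) ^+ 2) ?sqr_ge0 //; ring.
under eq_bigr do rewrite big_split /= sumr_const.
by rewrite big_split /= sumrMnl sumr_const -[_ *+ #|G|]mulr_natl; lra.
Qed.

Lemma paley_zygmund_card (R : realFieldType) (T : finType) (D : {set T})
    (Y : T -> R) (K : R) :
  (forall x, 0 <= Y x) -> 0 < \sum_(x in D) Y x ->
  #|D|%:R * \sum_(x in D) Y x ^+ 2 <= K * (\sum_(x in D) Y x) ^+ 2 ->
  #|D|%:R <= 4 * K * #|[set x in D | \sum_(y in D) Y y <= 2 * #|D|%:R * Y x]|%:R.
Proof.
move=> Y0; set N : R := #|D|%:R; set M := \sum_(x in D) Y x => M0 moments.
set G := [set x in D | M <= 2 * N * Y x].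
have N0 : 0 < N.
  by rewrite ltr0n card_gt0; apply: contraTneq M0; rewrite /M => ->; rewrite big_set0 ltxx.
have sumG (F : T -> R) : \sum_(x in G) F x = \sum_(x in D | M <= 2 * N * Y x) F x.
  by apply: eq_bigl => x; rewrite inE.
have small_off_G : \sum_(x in D | ~~ (M <= 2 * N * Y x)) Y x <= M / 2.
  apply: le_trans (_ : \sum_(x in D | ~~ (M <= 2 * N * Y x)) M / (2 * N) <= _).
    apply: ler_sum => x /andP[_]; rewrite -ltNge => /ltW.
    by rewrite ler_pdivlMr ?mulr_gt0 // mulrC.
  apply: le_trans (_ : \sum_(x in D) M / (2 * N) <= _).
    rewrite [X in _ <= X](bigID (fun x => M <= 2 * N * Y x)) /= lerDr.
    by apply: sumr_ge0 => x _; rewrite divr_ge0 ?mulr_ge0 ?ltW.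
  rewrite sumr_const -[_ *+ _]mulr_natl -/N le_eqVlt; apply/orP; left; apply/eqP.
  by field; exact: lt0r_neq0.
have large_on_G : M / 2 <= \sum_(x in G) Y x.
  have splitM : M = \sum_(x in D | M <= 2 * N * Y x) Y x
                    + \sum_(x in D | ~~ (M <= 2 * N * Y x)) Y x.
    by rewrite {1}/M (bigID (fun x => M <= 2 * N * Y x)).
  by rewrite sumG; lra.
have CS : (M / 2) ^+ 2 <= #|G|%:R * \sum_(x in D) Y x ^+ 2.
  apply: le_trans (_ : (\sum_(x in G) Y x) ^+ 2 <= _).
    by rewrite ler_sqr // nnegrE ?sumr_ge0 // divr_ge0 // ltW.
  apply: (le_trans (sqr_sum_le_card_sum_sqr G Y)).
  rewrite ler_wpM2l // sumG [X in _ <= X](bigID (fun x => M <= 2 * N * Y x)) /= lerDl.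
  by apply: sumr_ge0 => x _; apply: sqr_ge0.
rewrite -(ler_pM2r (exprn_gt0 2 M0)).
have := ler_wpM2l (ltW N0) CS; have := ler_wpM2l (ler0n R #|G|) moments.
lra.
Qed.

Section RowMoments.
Variables (R : comPzRingType) (n d : nat) (v : 'I_n -> R).
Let k t : R := (nsupsets t n d)%:R.
Let S := psum v 1 [set: 'I_n].
Let P k := psum v k [set: 'I_n].

Lemma sum_draws_setT (F : {set 'I_n} -> R) :
  \sum_(A : {set 'I_n} | #|A| == d) F A
  = \sum_(A in [set A : {set 'I_n} | A \subset [set: 'I_n] & #|A| == d]) F A.
Proof. by apply: eq_bigl => A; rewrite inE finset.subsetT. Qed.

Lemma sum_draws_psum1_sqr :
  \sum_(A : {set 'I_n} | #|A| == d) psum v 1 A ^+ 2 = k 2 * (S ^+ 2 - P 2) + k 1 * P 2.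
Proof.
rewrite sum_draws_setT; under eq_bigr do rewrite psum1_sqr_inj_sum.
rewrite big_split !sum_draws_inj_sum cardsT card_ord (@inj_sum2 _ _ v 1 1 2) // inj_sum1.
by rewrite /k /S /P /=; ring.
Qed.

Lemma sum_draws_psum1_exp4 :
  \sum_(A : {set 'I_n} | #|A| == d) psum v 1 A ^+ 4
  = k 4 * (S ^+ 4 - 6 * S ^+ 2 * P 2 + 3 * P 2 ^+ 2 + 8 * S * P 3 - 6 * P 4)
  + 6 * k 3 * ((S ^+ 2 - P 2) * P 2 - 2 * S * P 3 + 2 * P 4)
  + 4 * k 2 * (S * P 3 - P 4) + 3 * k 2 * (P 2 ^+ 2 - P 4) + k 1 * P 4.
Proof.
rewrite sum_draws_setT; under eq_bigr do rewrite psum1_exp4_inj_sum.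
rewrite !big_split -!mulr_sumr !sum_draws_inj_sum cardsT card_ord.
rewrite inj_sum1111 inj_sum211 (@inj_sum2 _ _ v 3 1 4) // (@inj_sum2 _ _ v 2 2 4) // inj_sum1.
by rewrite /k /S /P /=; ring.
Qed.

End RowMoments.

Lemma le_sqr_half (R : realFieldType) (p N k : R) :
  0 < p -> p <= 1 / 2 -> 0 < N -> k <= p * (p * N) -> k <= p * N / 2.
Proof. by move=> p_gt0 p_le N_gt0 k_le; have := mulr_gt0 p_gt0 N_gt0; nra. Qed.

(* [k2 * (S ^+ 2 - 1) + p * N] and the left-hand side of [moment4_le] are the
   sums of [psum v 1 A ^+ 2] and [psum v 1 A ^+ 4] over the d-subsets [A], as given
   by [sum_draws_psum1_sqr] and [sum_draws_psum1_exp4] for a unit vector [v], with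
   [k_t = nsupsets t n d], [p = d / n] and [N = 'C(n, d)]. *)
Lemma moment2_ge (R : realFieldType) (p N k2 S : R) :
  0 < p -> p <= 1 / 2 -> 0 < N -> k2 <= p * (p * N) ->
  p * N / 2 + k2 * S ^+ 2 <= k2 * (S ^+ 2 - 1) + p * N.
Proof. by move=> p_gt0 p_le N_gt0 /(le_sqr_half p_gt0 p_le N_gt0); nra. Qed.

Lemma moment4_le (R : realFieldType) (p N k2 k3 k4 S P3 P4 : R) :
  0 < p -> p <= 1 / 2 -> 0 < N ->
  0 <= k2 <= p * (p * N) -> 0 <= k3 <= p * k2 -> 0 <= k4 <= p * k3 ->
  -1 <= P3 <= 1 -> 0 <= P4 <= 1 ->
  k4 * (S ^+ 4 - 6 * S ^+ 2 + 3 + 8 * S * P3 - 6 * P4)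
  + 6 * k3 * (S ^+ 2 - 1 - 2 * S * P3 + 2 * P4)
  + 4 * k2 * (S * P3 - P4) + 3 * k2 * (1 - P4) + p * N * P4
  <= p ^+ 2 * k2 * (S ^+ 2) ^+ 2 + (12 * p + 2) * k2 * S ^+ 2 + 13 * p * N.
Proof.
move=> p_gt0 p_le N_gt0 /andP[k2_ge0 k2_le] /andP[k3_ge0 k3_le] /andP[k4_ge0 k4_le].
move=> /andP[P3_ge P3_le] /andP[P4_ge P4_le].
have scale_le (a a' x x' : R) : 0 <= a -> a <= a' -> x <= x' -> 0 <= x' -> a * x <= a' * x'.
  by move=> a0 aa' xx' x'0; apply: le_trans (ler_wpM2l a0 xx') (ler_wpM2r x'0 aa').
have P3_sqr : P3 ^+ 2 <= 1 by nra.
have SP3_le : S * P3 <= (S ^+ 2 + 1) / 2 by have := sqr_ge0 (S - P3); nra.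
have SP3_ge : - (S * P3) <= (S ^+ 2 + 1) / 2 by have := sqr_ge0 (S + P3); nra.
have -> : S ^+ 4 = (S ^+ 2) ^+ 2 by rewrite -exprM.
rewrite -[8 * S * P3]mulrA -[2 * S * P3]mulrA.
move: (sqr_ge0 S) SP3_le SP3_ge; move: (S * P3) (S ^+ 2) => SP3 s2 s2_ge0 SP3_le SP3_ge.
have termA : k4 * (s2 ^+ 2 - 6 * s2 + 3 + 8 * SP3 - 6 * P4) <= p ^+ 2 * k2 * (s2 ^+ 2 + 7).
  apply: (scale_le) => //; [|lra|nra].
  by rewrite expr2 -mulrA; apply: le_trans k4_le (ler_wpM2l (ltW p_gt0) k3_le).
have termB : k3 * (s2 - 1 - 2 * SP3 + 2 * P4) <= p * k2 * (2 * s2 + 2).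
  by apply: (scale_le) => //; lra.
have termC : k2 * (SP3 - P4) <= k2 * ((s2 + 1) / 2) by apply: ler_wpM2l => //; lra.
have termD : k2 * (1 - P4) <= k2 * 1 by apply: ler_wpM2l => //; lra.
have termE : p * N * P4 <= p * N * 1 by apply: ler_wpM2l => //; nra.
have k2_coef : (7 * p ^+ 2 + 12 * p + 5) * k2 <= 12 * p * N.
  have : 7 * p ^+ 2 + 12 * p + 5 <= 13 by nra.
  have := le_sqr_half p_gt0 p_le N_gt0 k2_le; have := mulr_gt0 p_gt0 N_gt0.
  nra.
nra.
Qed.

Lemma moment4_le_sqr_moment2 (R : realFieldType) (p N k2 s2 : R) :
  0 < p -> p <= 1 / 2 -> 0 < N -> 0 <= k2 -> k2 = 0 \/ p ^+ 2 * N <= 2 * k2 -> 0 <= s2 ->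
  p * N * (p ^+ 2 * k2 * s2 ^+ 2 + (12 * p + 2) * k2 * s2 + 13 * p * N)
  <= 100 * (p * N / 2 + k2 * s2) ^+ 2.
Proof.
move=> p_gt0 p_le N_gt0 k2_ge0 k2_cases s2_ge0.
have pN_gt0 := mulr_gt0 p_gt0 N_gt0.
have t1 : p * N * (p ^+ 2 * k2 * s2 ^+ 2) <= 100 * (k2 * s2) ^+ 2.
  case: k2_cases => [-> | k2_ge]; first by rewrite mulr0 !mul0r mulr0 expr2 !mulr0.
  have pk2s2_ge0 : 0 <= p * k2 * s2 ^+ 2 by rewrite mulr_ge0 ?sqr_ge0 // mulr_ge0 // ltW.
  have := ler_wpM2r pk2s2_ge0 k2_ge; nra.
have t2 : p * N * ((12 * p + 2) * k2 * s2) <= 100 * (2 * (p * N / 2) * (k2 * s2)).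
  have := mulr_ge0 (ltW pN_gt0) (mulr_ge0 k2_ge0 s2_ge0).
  nra.
have t3 : p * N * (13 * p * N) <= 100 * (p * N / 2) ^+ 2 by nra.
nra.
Qed.

Section SupsetCounts.
Variables (R : numFieldType) (n d : nat).
Hypothesis n_gt0 : (0 < n)%N.

Let nR_neq0 : n%:R != 0 :> R. Proof. by rewrite pnatr_eq0 -lt0n. Qed.

Lemma nsupsets1E : (nsupsets 1 n d)%:R = d%:R / n%:R * 'C(n, d)%:R :> R.
Proof. by apply: (mulIf nR_neq0); rewrite -natrM nsupsets1_mul natrM mulrAC divfK. Qed.

Lemma ler_nsupsetsS t : (d <= n)%N ->
  (nsupsets t.+1 n d)%:R <= d%:R / n%:R * (nsupsets t n d)%:R :> R.
Proof.
move=> dn; have [dt | td] := leqP d t; first by rewrite nsupsets_eq0 // mulr_ge0 ?divr_ge0.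
rewrite mulrAC ler_pdivlMr ?ltr0n // -!natrM ler_nat nsupsetsS_le //.
exact: leq_trans td dn.
Qed.

Lemma nsupsets2_cases : (0 < d)%N -> (d <= n)%N ->
  (nsupsets 2 n d)%:R = 0 :> R
  \/ (d%:R / n%:R) ^+ 2 * 'C(n, d)%:R <= 2 * (nsupsets 2 n d)%:R :> R.
Proof.
move=> d_gt0 dn; have [d1 | d2] := leqP d 1; first by left; rewrite nsupsets_eq0.
right; rewrite expr_div_n mulrAC ler_pdivrMr ?exprn_gt0 ?ltr0n //.
by rewrite -!natrX -!natrM ler_nat -!mulnn mulnA nsupsets2_ge.
Qed.

End SupsetCounts.

Lemma normr_le1_of_sum_sqr (R : realDomainType) n (v : 'I_n -> R) i :
  \sum_j v j ^+ 2 = 1 -> `|v i| <= 1.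
Proof.
move=> v2; have : v i ^+ 2 <= 1.
  by rewrite -v2 (bigD1 i) //= lerDl sumr_ge0 // => j _; apply: sqr_ge0.
by rewrite -real_normK ?num_real // -[X in _ <= X](expr1n _ 2) ler_sqr ?nnegrE.
Qed.

Lemma normr_psum_le_psum2 (R : realDomainType) n (v : 'I_n -> R) k (U : {set 'I_n}) :
  (forall i, `|v i| <= 1) -> (2 <= k)%N -> `|psum v k U| <= psum v 2 U.
Proof.
move=> v_le1 k_ge2; apply: le_trans (ler_norm_sum _ _ _) _; apply: ler_sum => i _.
by rewrite normrX -(real_normK (num_real (v i))) ler_wiXn2l.
Qed.

Lemma psum_unit_bounds (R : realDomainType) n (v : 'I_n -> R) :
  \sum_i v i ^+ 2 = 1 ->
  [/\ psum v 2 [set: 'I_n] = 1, -1 <= psum v 3 [set: 'I_n] <= 1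
    & 0 <= psum v 4 [set: 'I_n] <= 1].
Proof.
move=> v_unit; have v_le1 i : `|v i| <= 1 := normr_le1_of_sum_sqr i v_unit.
have P2E : psum v 2 [set: 'I_n] = 1.
  by rewrite -v_unit; apply: eq_bigl => i; rewrite finset.in_setT.
split=> //; first by rewrite -ler_norml -P2E normr_psum_le_psum2.
apply/andP; split; first by apply: sumr_ge0 => i _; apply: exprn_even_ge0.
by rewrite -P2E (le_trans (ler_norm _)) ?normr_psum_le_psum2.
Qed.

Section RowAnticoncentration.
Variables (R : realFieldType) (n d : nat) (v : 'I_n -> R).
Hypotheses (d_gt0 : (0 < d)%N) (dn : (2 * d <= n)%N) (v_unit : \sum_i v i ^+ 2 = 1).

Let p : R := d%:R / n%:R.
Let N : R := 'C(n, d)%:R.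
Let S : R := psum v 1 [set: 'I_n].
Let k2 : R := (nsupsets 2 n d)%:R.
Let M2 : R := \sum_(A : {set 'I_n} | #|A| == d) psum v 1 A ^+ 2.

Let n_gt0 : (0 < n)%N. Proof. by move: d_gt0 dn; lia. Qed.
Let d_le_n : (d <= n)%N. Proof. by move: dn; lia. Qed.
Let p_gt0 : 0 < p. Proof. by rewrite divr_gt0 ?ltr0n. Qed.
Let N_gt0 : 0 < N. Proof. by rewrite ltr0n bin_gt0. Qed.
Let pN_gt0 : 0 < p * N. Proof. exact: mulr_gt0. Qed.

Let p_le : p <= 1 / 2.
Proof.
have : 2 * d%:R <= n%:R :> R by rewrite -natrM ler_nat.
by rewrite ler_pdivrMr ?ltr0n //; lra.
Qed.

Let k_bd t : (0 : R) <= (nsupsets t.+1 n d)%:R <= p * (nsupsets t n d)%:R.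
Proof. by rewrite ler0n ler_nsupsetsS. Qed.

Let k2_bd : 0 <= k2 <= p * (p * N).
Proof. by rewrite -(nsupsets1E R d n_gt0) k_bd. Qed.

Lemma row_moment2_ge : p * N / 2 + k2 * S ^+ 2 <= M2.
Proof.
have [P2E _ _] := psum_unit_bounds v_unit.
have /andP[_ k2_le] := k2_bd.
rewrite /M2 sum_draws_psum1_sqr P2E (nsupsets1E R d n_gt0) mulr1.
exact: moment2_ge.
Qed.

Lemma row_moment4_le :
  N * \sum_(A : {set 'I_n} | #|A| == d) (psum v 1 A ^+ 2) ^+ 2 <= 100 / p * M2 ^+ 2.
Proof.
have [P2E P3_bd P4_bd] := psum_unit_bounds v_unit.
have /andP[k2_ge0 _] := k2_bd.
under eq_bigr do rewrite -exprM.
rewrite mulrAC ler_pdivlMr // mulrC mulrA.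
rewrite sum_draws_psum1_exp4 P2E (nsupsets1E R d n_gt0) expr1n !mulr1.
have M4_le := moment4_le S p_gt0 p_le N_gt0 k2_bd (k_bd 2) (k_bd 3) P3_bd P4_bd.
apply: le_trans (ler_wpM2l (ltW pN_gt0) M4_le) _.
have k2_cases := nsupsets2_cases R n_gt0 d_gt0 d_le_n.
apply: le_trans (moment4_le_sqr_moment2 p_gt0 p_le N_gt0 k2_ge0 k2_cases (sqr_ge0 S)) _.
have M2_lb_ge0 : 0 <= p * N / 2 + k2 * S ^+ 2.
  exact: addr_ge0 (divr_ge0 (ltW pN_gt0) (ler0n _ 2)) (mulr_ge0 k2_ge0 (sqr_ge0 S)).
rewrite ler_pM2l ?ltr0n // ler_sqr ?nnegrE // ?row_moment2_ge //.
exact: le_trans M2_lb_ge0 row_moment2_ge.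
Qed.

Lemma row_anticoncentration :
  p * N <= 400 * #|[set A : {set 'I_n} | (#|A| == d) && (p / 4 <= psum v 1 A ^+ 2)]|%:R.
Proof.
have M2_gt0 : 0 < M2.
  apply: lt_le_trans row_moment2_ge; apply: ltr_wpDr; last exact: divr_gt0 pN_gt0 (ltr0Sn _ 1).
  by rewrite mulr_ge0 ?sqr_ge0 ?ler0n.
have sumD F : \sum_(A in [set A : {set 'I_n} | #|A| == d]) F A
    = \sum_(A : {set 'I_n} | #|A| == d) F A :> R by apply: eq_bigl => A; rewrite inE.
have := paley_zygmund_card (D := [set A : {set 'I_n} | #|A| == d]) (K := 100 / p)
  (fun A => sqr_ge0 (psum v 1 A)).
rewrite !sumD card_draws card_ord -/N => /(_ M2_gt0 row_moment4_le).
set g := #|_|%:R => /(ler_wpM2l (ltW p_gt0)).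
rewrite (_ : p * (4 * (100 / p) * g) = 400 * g); last by field; exact: lt0r_neq0.
move/le_trans; apply; rewrite ler_pM2l ?ltr0n // ler_nat; apply: subset_leq_card.
apply/fintype.subsetP => A; rewrite !inE => /andP[-> /(le_trans row_moment2_ge) M2_le] /=.
have := le_trans (ler_wpDr (mulr_ge0 (ler0n _ _) (sqr_ge0 S)) (lexx (p * N / 2))) M2_le.
by move: N_gt0; move: (psum v 1 A ^+ 2) => y; nra.
Qed.

End RowAnticoncentration.

Lemma sum_rows_dsparse_prod (R : comPzSemiRingType) m n d (F : {set 'I_n} -> R) :
  \sum_(S in rows_dsparse m n d) \prod_i F (S i)
  = (\sum_(A : {set 'I_n} | #|A| == d) F A) ^+ m.
Proof.
rewrite -[in RHS](card_ord m) -prodr_const.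
rewrite (bigA_distr_big (fun A : {set 'I_n} => #|A| == d) (fun (i : 'I_m) A => F A)).
by apply: eq_bigl => S; rewrite inE; apply/forallP/familyP => H i; apply: H.
Qed.

Lemma sum_draws_const (R : nmodType) n d (x : R) :
  \sum_(A : {set 'I_n} | #|A| == d) x = x *+ 'C(n, d).
Proof.
rewrite sumr_const -[in RHS](card_ord n) -card_draws.
by congr (_ *+ _); apply: eq_card => A; rewrite inE.
Qed.

Lemma card_rows_dsparse (R : comPzSemiRingType) m n d :
  #|rows_dsparse m n d|%:R = 'C(n, d)%:R ^+ m :> R.
Proof.
rewrite -sum_draws_const -sum_rows_dsparse_prod -sumr_const.
by apply: eq_bigr => S _; rewrite prodr_const expr1n.
Qed.

Lemma unif_prob_rows_markov (R : realType) m n d (w : {set 'I_n} -> R)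
    (E : pred {ffun 'I_m -> {set 'I_n}}) (t : R) :
  (d <= n)%N -> 0 < t -> (forall A, 0 <= w A) ->
  (forall S, S \in rows_dsparse m n d -> E S -> t <= \prod_i w (S i)) ->
  unif_prob (R := R) (rows_dsparse m n d) E
  <= t^-1 * ((\sum_(A : {set 'I_n} | #|A| == d) w A) / 'C(n, d)%:R) ^+ m.
Proof.
move=> dn t_gt0 w_ge0 E_prod.
have N_gt0 : 0 < 'C(n, d)%:R ^+ m :> R by rewrite exprn_gt0 // ltr0n bin_gt0.
rewrite /unif_prob card_rows_dsparse expr_div_n mulrA ler_pM2r ?invr_gt0 //.
rewrite ler_pdivlMl // -sum_rows_dsparse_prod mulr_natr -sumr_const.
apply: le_trans (_ : \sum_(S in [set S in rows_dsparse m n d | E S]) \prod_i w (S i) <= _).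
  by apply: ler_sum => S; rewrite inE => /andP[]; apply: E_prod.
rewrite (eq_bigl (fun S => (S \in rows_dsparse m n d) && E S)) => [|S]; last by rewrite inE.
rewrite [X in _ <= X](bigID E) /= lerDl.
by apply: sumr_ge0 => S _; apply: prodr_ge0.
Qed.

Lemma bin_mx_mulE (R : realType) m n (S : {ffun 'I_m -> {set 'I_n}}) (v : 'cV[R]_n) i :
  (bin_mx S *m v) i 0 = psum (fun j => v j 0) 1 (S i).
Proof.
rewrite !mxE /psum [RHS]big_mkcond /=; apply: eq_bigr => j _; rewrite !mxE.
by case: (j \in S i); rewrite ?mul1r ?mul0r ?expr1.
Qed.

Lemma expRN1_le_half (R : realType) : expR (-1) <= 1 / 2 :> R.
Proof.
have e_ge2 : 2 <= expR (1 : R) by have := expR_ge1Dx (1 : R); lra.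
by rewrite expRN mul1r lef_pV2 ?posrE ?expR_gt0.
Qed.

Lemma row_exp_mean_le (R : realType) n d (v : 'I_n -> R) :
  (0 < d)%N -> (2 * d <= n)%N -> \sum_i v i ^+ 2 = 1 ->
  (\sum_(A : {set 'I_n} | #|A| == d) expR (- (4 / (d%:R / n%:R) * psum v 1 A ^+ 2)))
    / 'C(n, d)%:R
  <= expR (- (d%:R / n%:R / 800)).
Proof.
move=> d_gt0 dn v_unit; have := row_anticoncentration d_gt0 dn v_unit.
have N_gt0 : 0 < 'C(n, d)%:R :> R by rewrite ltr0n bin_gt0; lia.
rewrite ler_pdivrMr // [X in _ <= X]mulrC.
set p : R := d%:R / n%:R; set N : R := 'C(n, d)%:R.
set G := [set A | _ & _] => G_large.
have p_gt0 : 0 < p by rewrite divr_gt0 ?ltr0n //; lia.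
(* Each weight is at most 1, and at most [expR (-1) <= 1/2] on the sets counted
   by [row_anticoncentration]. *)
have w_le (A : {set 'I_n}) :
    #|A| == d -> expR (- (4 / p * psum v 1 A ^+ 2)) <= 1 - (A \in G)%:R / 2.
  move=> dA; rewrite inE dA /=; have [YA_ge | _] /= := boolP (p / 4 <= _).
    rewrite (_ : 1 - 1 / 2 = 1 / 2 :> R); last by field.
    apply: le_trans (expRN1_le_half R).
    have c_gt0 : 0 < 4 / p by rewrite divr_gt0.
    by rewrite ler_expR lerN2 -ler_pdivrMl // mulr1 invfM invrK mulrC.
  by rewrite mulr0n mul0r subr0 -expR0 ler_expR oppr_le0 mulr_ge0 ?sqr_ge0 // divr_ge0 // ltW.
apply: le_trans (ler_sum _ w_le) _.
rewrite sumrB sum_draws_const -mulr_suml -mulr_natl mulr1.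
have -> : \sum_(A : {set 'I_n} | #|A| == d) (A \in G)%:R = #|G|%:R :> R.
  rewrite (eq_bigr (fun A => if A \in G then 1 else 0)) => [|A _]; last by case: (A \in G).
  rewrite -big_mkcondr sumr_const; congr (_ *+ _); apply: eq_card => A.
  by rewrite unfold_in /= inE andb_idl // => /andP[].
have := expR_ge1Dx (- (p / 800)); have := ler0n R 'C(n, d).
move: G_large; rewrite -/N; move: (#|G|%:R) (expR _) => g E; nra.
Qed.

Lemma vnorm_sqr (R : realType) n (x : 'cV[R]_n) : vnorm x ^+ 2 = \sum_i x i 0 ^+ 2.
Proof. by rewrite sqr_sqrtr // sumr_ge0 // => i _; apply: sqr_ge0. Qed.

Lemma prod_expR_bin_mx_mul (R : realType) m n (S : {ffun 'I_m -> {set 'I_n}})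
    (v : 'cV[R]_n) (a : R) :
  \prod_i expR (- (a * psum (fun j => v j 0) 1 (S i) ^+ 2))
  = expR (- (a * vnorm (bin_mx S *m v) ^+ 2)).
Proof.
rewrite -expR_sum sumrN -mulr_sumr vnorm_sqr.
by under [in RHS]eq_bigr do rewrite bin_mx_mulE.
Qed.

Lemma chernoff_exponent_le (R : realType) (g x : R) m : 0 < g -> x / 2 <= m%:R ->
  (expR (- (g / 4 * x)))^-1 * expR (- g) ^+ m <= expR (- (g / 4 * x)).
Proof.
move=> g_gt0 m_ge; rewrite -expRN opprK -expRM_natr -expRD ler_expR.
by have := ler_wpM2l (ltW g_gt0) m_ge; lra.
Qed.

Lemma prod_row_weights_ge (R : realType) m n (S : {ffun 'I_m -> {set 'I_n}})
    (v : 'cV[R]_n) (p : R) : 0 < p ->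
  vnorm (bin_mx S *m v) <= Num.sqrt (p / 800 / 16) * Num.sqrt (p * n%:R) ->
  expR (- (p / 800 / 4 * n%:R))
  <= \prod_i expR (- (4 / p * psum (fun j => v j 0) 1 (S i) ^+ 2)).
Proof.
move=> p_gt0; rewrite prod_expR_bin_mx_mul ler_expR lerN2.
have c_ge0 : 0 <= p / 800 / 16 := divr_ge0 (divr_ge0 (ltW p_gt0) (ler0n _ _)) (ler0n _ _).
have pn_ge0 : 0 <= p * n%:R := mulr_ge0 (ltW p_gt0) (ler0n _ _).
rewrite -sqrtrM // => vnorm_le.
have : vnorm (bin_mx S *m v) ^+ 2 <= p / 800 / 16 * (p * n%:R).
  rewrite -[X in _ <= X]sqr_sqrtr; last exact: mulr_ge0 c_ge0 pn_ge0.
  by rewrite ler_sqr ?nnegrE ?sqrtr_ge0.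
move/(ler_wpM2l (divr_ge0 (ler0n _ 4) (ltW p_gt0))) /le_trans; apply.
by rewrite le_eqVlt; apply/orP; left; apply/eqP; field; exact: lt0r_neq0.
Qed.

Theorem lemma2p3 (R : realType) (p : R) :
  0 < p -> p <= 1 / 2 ->
  exists C c : R, 0 < C /\ 0 < c /\
    forall (n d m : nat) (v : 'cV[R]_n),
      (0 < d)%N -> (d <= n)%N -> d%:R = p * n%:R ->
      n%:R / 2 <= m%:R :> R -> (m <= n)%N ->
      vnorm v = 1 ->
      unif_prob (R:=R) (rows_dsparse m n d)
        (fun S => vnorm (bin_mx S *m v) <= c * Num.sqrt (p * n%:R))
      <= expR (- (C * n%:R)).
Proof.
move=> p_gt0 p_le; exists (p / 800 / 4), (Num.sqrt (p / 800 / 16)).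
have rate_gt0 : 0 < p / 800 by rewrite divr_gt0 ?ltr0n.
split; first by rewrite divr_gt0 ?ltr0n.
split; first by rewrite sqrtr_gt0 divr_gt0 ?ltr0n.
move=> n d m v d_gt0 dn dE m_ge _ v_unit.
have pE : p = d%:R / n%:R by rewrite dE mulfK // lt0r_neq0 // ltr0n; lia.
have d2n : (2 * d <= n)%N.
  by rewrite -(ler_nat R) natrM dE; have := ler_wpM2r (ler0n R n) p_le; lra.
have v_unit' : \sum_i v i 0 ^+ 2 = 1 by rewrite -vnorm_sqr v_unit expr1n.
have := row_exp_mean_le d_gt0 d2n v_unit'; rewrite -pE => mean_le.
apply: le_trans.
  apply: (unif_prob_rows_markov (t := expR (- (p / 800 / 4 * n%:R)))
    (w := fun A => expR (- (4 / p * psum (fun j => v j 0) 1 A ^+ 2)))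
    dn (expR_gt0 _) (fun A => ltW (expR_gt0 _))) => S _; exact: prod_row_weights_ge.
apply: (le_trans _ (chernoff_exponent_le rate_gt0 m_ge)).
apply: ler_wpM2l; first by rewrite invr_ge0; apply: ltW; apply: expR_gt0.
apply: lerXn2r (ltW (expR_gt0 _)) mean_le.
by apply: divr_ge0 (ler0n _ _); apply: sumr_ge0 => A _; apply: ltW; apply: expR_gt0.
Qed.
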